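(* Let $n$ be even and consider the bi-party bi-objective pseudo-Boolean problem BPAOAZ on $\{0,1\}^n$ (defined in the context), whose common Pareto set is $\{1^n\}$. The expected running time of the simple evolutionary multi-party multi-objective optimizer $\text{EMPMO}_{\text{simple}}$ (with $M=2$ parties) applied to BPAOAZ is bounded by $O(3n^2\log n)$.
   Context: BPAOAZ: for $\mathbf{x}=(x_1,\dots,x_n)\in\{0,1\}^n$ with $n$ even, party 1 has the two objectives $f_{11}(\mathbf{x})=\sum_{i=n/2+1}^{n}x_i$ and $f_{12}(\mathbf{x})=\sum_{i=1}^{n/2}x_i+\sum_{i=n/2+1}^{n}(1-x_i)$; party 2 has the two objectives $f_{21}(\mathbf{x})=\sum_{i=1}^{n/2}(1-x_i)+\sum_{i=n/2+1}^{n}x_i$ and $f_{22}(\mathbf{x})=\sum_{i=1}^{n/2}x_i$. All objectives are to be maximized. Write $F_m=(f_{m1},f_{m2})$. For party $m$, $\mathbf{z}$ weakly dominates $\mathbf{x}$ ($\mathbf{z}\succeq_m\mathbf{x}$) if $f_{mk}(\mathbf{z})\ge f_{mk}(\mathbf{x})$ for $k=1,2$, and dominates it ($\mathbf{z}\succ_m\mathbf{x}$) if additionally strict inequality holds for some $k$. The Pareto set of party $m$ is the set of $\mathbf{x}$ not dominated (w.r.t. $\succ_m$) by any point of $\{0,1\}^n$; the common Pareto set is the intersection of the two parties' Pareto sets. One-bit mutation flips one uniformly random bit. $\text{EMPMO}_{\text{simple}}$: choose $\mathbf{x}$ uniformly at random from $\{0,1\}^n$; set $\Phi=\{\mathbf{x}\}$,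 $P_1=P_2=\{\mathbf{x}\}$. In each iteration, for $m=1,2$ in turn: pick $\mathbf{x}\in P_m$ uniformly at random and apply one-bit mutation to get $\mathbf{x}'$; if there is no $\mathbf{z}\in P_m$ with $\mathbf{z}\succ_m\mathbf{x}'$ or $F_m(\mathbf{z})=F_m(\mathbf{x}')$, then set $P_m\leftarrow (P_m\setminus\{\mathbf{z}\in P_m:\mathbf{x}'\succ_m\mathbf{z}\})\cup\{\mathbf{x}'\}$, and moreover, if there is no $\mathbf{z}\in\Phi$ such that for all parties $m'$ ($\mathbf{z}\succ_{m'}\mathbf{x}'$ or $F_{m'}(\mathbf{z})=F_{m'}(\mathbf{x}')$), set $\Phi\leftarrow(\Phi\setminus\{\mathbf{z}\in\Phi:\exists m''\ \mathbf{x}'\succ_{m''}\mathbf{z}\})\cup\{\mathbf{x}'\}$. The running time is the number of fitness evaluations (i.e. mutations, counting both parties' mutations) until the common Pareto-optimal solutions are found for the first time. *)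

From HB Require Import structures.
From mathcomp Require Import all_boot all_order all_algebra.
From mathcomp Require Import all_classical all_reals all_analysis.
Set Implicit Arguments. Unset Strict Implicit. Unset Printing Implicit Defensive.
Import Order.TTheory GRing.Theory Num.Theory.

Definition bs (n : nat) := {ffun 'I_n -> bool}.

Section BPAOAZ.
Variable n : nat.

Definition half := n./2.

Definition f11 (x : bs n) : nat := \sum_(i < n | half <= i) x i.
Definition f12 (x : bs n) : nat :=
  \sum_(i < n | i < half) x i + \sum_(i < n | half <= i) ~~ x i.
Definition f21 (x : bs n) : nat :=
  \sum_(i < n | i < half) ~~ x i + \sum_(i < n | half <= i) x i.
Definition f22 (x : bs n) : nat := \sum_(i < n | i < half) x i.

Definition Fobj (m : 'I_2) (x : bs n) : nat * nat :=
  if m == ord0 then (f11 x, f12 x) else (f21 x, f22 x).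

Definition wdom (m : 'I_2) (z x : bs n) : bool :=
  ((Fobj m x).1 <= (Fobj m z).1) && ((Fobj m x).2 <= (Fobj m z).2).
Definition dom (m : 'I_2) (z x : bs n) : bool :=
  wdom m z x && (((Fobj m x).1 < (Fobj m z).1) || ((Fobj m x).2 < (Fobj m z).2)).

Definition paretoSet (m : 'I_2) : {set bs n} := [set x | [forall z, ~~ dom m z x]].
Definition commonPareto : {set bs n} := \bigcap_(m < 2) paretoSet m.

Definition state := ({set bs n} * {set bs n} * {set bs n})%type.
Definition Phi (s : state) := s.1.1.
Definition Pop (m : 'I_2) (s : state) := if m == ord0 then s.1.2 else s.2.
Definition setPop (m : 'I_2) (s : state) (P : {set bs n}) : state :=
  if m == ord0 then (s.1.1, P, s.2) else (s.1.1, s.1.2, P).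

Definition init_state (x : bs n) : state := ([set x], [set x], [set x]).

Definition flip (x : bs n) (i : 'I_n) : bs n :=
  [ffun j => if j == i then ~~ x j else x j].

Definition update (m : 'I_2) (s : state) (x' : bs n) : state :=
  if [exists z in Pop m s, dom m z x' || (Fobj m z == Fobj m x')] then s
  else
    let s1 := setPop m s ([set z in Pop m s | ~~ dom m x' z] :|: [set x']) in
    if [exists z in Phi s,
          [forall m' : 'I_2, dom m' z x' || (Fobj m' z == Fobj m' x')]]
    then s1
    else (([set z in Phi s | ~~ [exists m'' : 'I_2, dom m'' x' z]] :|: [set x']),
          s1.1.2, s1.2).

(* the run is finished once all common Pareto optimal solutions are found *)
Definition hit (s : state) : bool := commonPareto \subset Phi s.

Definition party (t : nat) : 'I_2 := if odd t then ord_max else ord0.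

Variable R : realType.
Local Open Scope ring_scope.

(* transition probability of one mutation step by party m :
   x uniform in P_m, bit i uniform in 'I_n *)
Definition step (m : 'I_2) (s s' : state) : R :=
  \sum_(x in Pop m s) \sum_(i < n)
     ((update m s (flip x i) == s')%:R / ((#|Pop m s| * n)%:R)).

(* q t s = Pr[ after t mutations the state is s and no hit occurred so far ] *)
Fixpoint q (t : nat) (s : state) : R :=
  match t with
  | 0 => if hit s then 0 else \sum_(x : bs n) (s == init_state x)%:R / (2 ^ n)%:R
  | t'.+1 => if hit s then 0 else \sum_(s0 : state) q t' s0 * step (party t') s0 s
  end.

(* Pr[ T > t ], T = number of fitness evaluations (mutations) until hit *)
Definition tailP (t : nat) : R := \sum_(s : state) q t s.

(* expected running time E[T] = sum_{t >= 0} Pr[T > t]  (in \bar R) *)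
Definition expected_runtime : \bar R := (\sum_(0 <= t <oo) (tailP t)%:E)%E.

End BPAOAZ.

From HB Require Import structures.
From mathcomp Require Import all_boot all_order all_algebra.
From mathcomp Require Import all_classical all_reals all_analysis.
From mathcomp Require Import zify ring lra.
Import Order.TTheory GRing.Theory Num.Theory.
Set Implicit Arguments. Unset Strict Implicit. Unset Printing Implicit Defensive.

(* Only party 1 matters.  No two points of its population P1 share the value
   of f11 (one would weakly dominate the other), so |P1| <= n/2 + 1, and the
   lexicographically best point of P1 (largest f11, then largest f12) never
   gets worse.  Flipping one of its zero bits in the second half is always
   accepted and raises f11; once f11 = n/2, flipping one of its zero bits in
   the first half raises f12; and when that point becomes 1^n, the only common
   Pareto optimum, it enters Phi.  With k improving bits at the current level,
   the level is left after an expected (n/2 + 1) n / k mutations of party 1.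
   The resulting fitness-level potential with harmonic weights decreases by at
   least 1 in expectation at every mutation of party 1 and is left unchanged
   by party 2, so additive drift bounds the expected running time by
   2 (n/2 + 1) n (H(n/2) + H(n/2)) = O(n^2 log n). *)

Section AdditiveDrift.
Variable R : realType.
Local Open Scope ring_scope.

Lemma nneseries_le (u : nat -> R) (B : R) :
  (forall t, 0 <= u t) -> (forall N, \sum_(0 <= t < N) u t <= B) ->
  (\sum_(0 <= t <oo) (u t)%:E <= B%:E)%E.
Proof.
move=> u_ge0 partial_le; apply: lime_le.
  by apply: is_cvg_nneseries => t _ _; rewrite lee_fin.
by apply: nearW => N; rewrite sumEFin lee_fin.
Qed.

Variable S : finType.
Variables (K : nat -> S -> S -> R) (q V : nat -> S -> R).
Hypothesis q_ge0 : forall t s, 0 <= q t s.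
Hypothesis V_ge0 : forall t s, 0 <= V t s.
Hypothesis q_succ : forall t s', q t.+1 s' <= \sum_s q t s * K t s s'.
Hypothesis V_drift :
  forall t s, 0 < q t s -> 1 + \sum_s' K t s s' * V t.+1 s' <= V t s.

Let W t := \sum_s q t s * V t s.

Let W_ge0 t : 0 <= W t.
Proof. by apply: sumr_ge0 => s _; rewrite mulr_ge0. Qed.

Let W_succ t : \sum_s q t s + W t.+1 <= W t.
Proof.
have push : W t.+1 <= \sum_s q t s * \sum_s' K t s s' * V t.+1 s'.
  under [X in _ <= X]eq_bigr do rewrite mulr_sumr.
  rewrite exchange_big /=; apply: ler_sum => s' _.
  under eq_bigr do rewrite mulrA; rewrite -mulr_suml.
  exact: ler_wpM2r.
have drift : \sum_s q t s * \sum_s' K t s s' * V t.+1 s' <= W t - \sum_s q t s.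
  rewrite /W -sumrB; apply: ler_sum => s _; rewrite -[X in _ - X]mulr1 -mulrBr.
  have := q_ge0 t s; rewrite le0r => /orP[/eqP->|q_gt0]; first by rewrite !mul0r.
  by apply: ler_wpM2l => //; rewrite lerBrDl V_drift.
lra.
Qed.

Lemma additive_drift N : \sum_(0 <= t < N) \sum_s q t s <= \sum_s q 0 s * V 0 s.
Proof.
suff : \sum_(0 <= t < N) \sum_s q t s <= W 0 - W N by have := W_ge0 N; rewrite /W; lra.
elim: N => [|N IH]; first by rewrite big_geq // subrr.
by rewrite big_nat_recr //=; have := W_succ N; lra.
Qed.

End AdditiveDrift.

Section UniformMean.
Variables (R : realType) (T I : finType).
Local Open Scope ring_scope.

Definition mean (P : {pred T}) (F : T -> I -> R) : R :=
  (\sum_(x in P) \sum_(i : I) F x i) / (#|P| * #|I|)%:R.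

Lemma sum_sum_const (P : {pred T}) (u : R) :
  \sum_(x in P) \sum_(i : I) u = (#|P| * #|I|)%:R * u.
Proof. by rewrite !sumr_const -mulrnA mulr_natl mulnC. Qed.

Lemma mean_le (P : {pred T}) (F : T -> I -> R) u : 0 <= u ->
  (forall x i, x \in P -> F x i <= u) -> mean P F <= u.
Proof.
move=> u_ge0 F_le; rewrite /mean.
have [->|d_gt0] := posnP (#|P| * #|I|)%N; first by rewrite invr0 mulr0.
rewrite ler_pdivrMr ?ltr0n // mulrC -sum_sum_const.
by apply: ler_sum => x xP; apply: ler_sum => i _; apply: F_le.
Qed.

Lemma mean_le_sub1 (P : {pred T}) (F : T -> I -> R) (u c : R) (y : T) (G : {pred I}) :
  y \in P -> (0 < #|G|)%N -> (#|P| * #|I|)%:R <= c ->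
  (forall x i, x \in P -> F x i <= u) ->
  (forall i, i \in G -> F y i <= u - c / #|G|%:R) ->
  mean P F <= u - 1.
Proof.
move=> yP G_gt0 d_le F_le FyG_le; rewrite /mean.
have d_gt0 : (0 < #|P| * #|I|)%N.
  by rewrite muln_gt0; apply/andP; split; apply/card_gt0P;
    [exists y | have /card_gt0P[i _] := G_gt0; exists i].
pose e i := (i \in G)%:R * (c / #|G|%:R).
have Fy_le : \sum_(i : I) F y i <= \sum_(i : I) (u - e i).
  by apply: ler_sum => i _; rewrite /e; case: (boolP (i \in G)) => iG;
    rewrite ?mul1r ?mul0r ?subr0 ?FyG_le ?F_le.
have sum_e : \sum_(i : I) e i = c.
  rewrite -mulr_suml -natr_sum -big_mkcond /= sum1_card.
  by rewrite mulrCA mulfV ?mulr1 // pnatr_eq0 -lt0n.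
have sum_le : \sum_(x in P) \sum_(i : I) F x i <= (#|P| * #|I|)%:R * u - c.
  rewrite -sum_sum_const (bigD1 y) //= [in leRHS](bigD1 y) //=.
  rewrite addrAC -sum_e -sumrB; apply: lerD => //.
  by apply: ler_sum => x /andP[xP _]; apply: ler_sum => i _; apply: F_le.
rewrite ler_pdivrMr ?ltr0n //; apply: (le_trans sum_le).
have : 1 * (#|P| * #|I|)%:R <= c by rewrite mul1r.
lra.
Qed.

End UniformMean.

Section HarmonicNumbers.
Variable R : realType.
Local Open Scope ring_scope.

Lemma harmonic_series_ge0 k : 0 <= series (@harmonic R) k.
Proof. by apply: sumr_ge0 => i _; apply: harmonic_ge0. Qed.

Lemma harmonic_series_le j k : (j <= k)%N -> series (@harmonic R) j <= series harmonic k.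
Proof.
by apply: (@nondecreasing_series R harmonic predT 0) => i _ _; apply: harmonic_ge0.
Qed.

Lemma harmonic_series_le_ln k : (0 < k)%N -> series (@harmonic R) k <= 1 + ln k%:R.
Proof.
case: k => // k _; elim: k => [|k IH].
  by rewrite seriesSr /series /= big_geq // add0r invr1 ln1 addr0.
rewrite seriesSr /=.
have k2_gt0 : 0 < k.+2%:R :> R by rewrite ltr0n.
have ratio : k.+1%:R = k.+2%:R * (1 - k.+2%:R^-1) :> R.
  by rewrite mulrBr mulr1 mulfV ?gt_eqF // -[k.+2]addn1 natrD addrK.
have ln_le : ln (1 - k.+2%:R^-1) <= - k.+2%:R^-1 :> R.
  by apply: le_ln1Dx; rewrite ltrNl opprK invf_lt1 ?ltr1n.
rewrite ratio lnM ?posrE // in IH; last by rewrite subr_gt0 invf_lt1 ?ltr1n.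
set b := k.+2%:R^-1 in ln_le IH *; lra.
Qed.

Lemma ln_nat_ge1 n : (4 <= n)%N -> 1 <= ln n%:R :> R.
Proof.
move=> n_ge4; have : ln (1 - 2^-1) <= - 2^-1 :> R by apply: le_ln1Dx; lra.
have -> : 1 - 2^-1 = 2^-1 :> R by field.
rewrite lnV ?posrE // => ln2_ge; apply: (@le_trans _ _ (ln (2 * 2))).
  by rewrite lnM ?posrE //; lra.
by rewrite ler_ln ?posrE ?ltr0n ?(ltn_trans _ n_ge4) // -natrM ler_nat.
Qed.

End HarmonicNumbers.

Section BitCounts.
Variable n : nat.
Implicit Types (P : pred 'I_n) (x : bs n).

Definition ones_in P x : nat := \sum_(i < n | P i) x i.
Definition zeros_in P x : nat := \sum_(i < n | P i) ~~ x i.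

Lemma ones_in_add_zeros_in P x : ones_in P x + zeros_in P x = #|P|.
Proof. by rewrite -big_split -sum1_card; apply: eq_bigr => i _; case: (x i). Qed.

Lemma zeros_in_card P x : zeros_in P x = #|[pred i | P i && ~~ x i]|.
Proof. by rewrite /zeros_in -sum1_card big_mkcondr /=. Qed.

Lemma ones_in_flip P x j : x j = false -> ones_in P (flip x j) = ones_in P x + P j.
Proof.
move=> xj; have flipE i : (flip x j i : nat) = x i + (i == j).
  by rewrite ffunE; case: eqP => [->|]; rewrite ?xj ?addn0.
rewrite /ones_in (eq_bigr _ (fun i _ => flipE i)) big_split /=; congr (_ + _).
rewrite big_mkcond (bigD1 j) //= eqxx big1 ?addn0 => [|i /negbTE->]; last by case: (P i).
by case: (P j).
Qed.

Lemma zeros_in_flip P x j : x j = false -> zeros_in P (flip x j) + P j = zeros_in P x.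
Proof.
move=> xj; have := ones_in_flip P xj.
have := ones_in_add_zeros_in P x; have := ones_in_add_zeros_in P (flip x j); lia.
Qed.

Lemma zeros_in_eq0 P x : zeros_in P x = 0 -> forall i, P i -> x i.
Proof.
move/eqP; rewrite sum_nat_eq0 => /forallP zero i Pi.
by have := zero i; rewrite Pi; case: (x i).
Qed.

Lemma card_le_ord P : (#|P| <= n)%N.
Proof. by apply: leq_trans (max_card _) _; rewrite card_ord. Qed.

End BitCounts.

Section Dominance.
Variable n : nat.
Implicit Types (x z : bs n) (m : 'I_2).

Definition lo : pred 'I_n := fun i => i < half n.
Definition hi : pred 'I_n := fun i => half n <= i.

Lemma f11E x : f11 x = ones_in hi x. Proof. by []. Qed.
Lemma f12E x : f12 x = ones_in lo x + zeros_in hi x. Proof. by []. Qed.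
Lemma f21E x : f21 x = zeros_in lo x + ones_in hi x. Proof. by []. Qed.
Lemma f22E x : f22 x = ones_in lo x. Proof. by []. Qed.

Definition ones : bs n := [ffun => true].

Lemma zeros_in_ones P : zeros_in P ones = 0.
Proof. by apply: big1 => i _; rewrite ffunE. Qed.

Lemma eq_ones x : zeros_in lo x = 0 -> zeros_in hi x = 0 -> x = ones.
Proof.
move=> /zeros_in_eq0 x_lo /zeros_in_eq0 x_hi; apply/ffunP => i; rewrite ffunE.
by case: (ltnP i (half n)) => [/x_lo|/x_hi].
Qed.

Lemma ord2_cases m : m = ord0 \/ m = ord_max.
Proof. by case: m => [[|[|]]] // ?; [left|right]; apply/val_inj. Qed.

Lemma wdom1E z x : wdom ord0 z x = (f11 x <= f11 z) && (f12 x <= f12 z).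
Proof. by []. Qed.
Lemma wdom2E z x : wdom ord_max z x = (f21 x <= f21 z) && (f22 x <= f22 z).
Proof. by []. Qed.

Lemma wdom_ones m z : wdom m z ones -> z = ones.
Proof.
have := ones_in_add_zeros_in lo z; have := ones_in_add_zeros_in hi z.
have := ones_in_add_zeros_in lo ones; have := ones_in_add_zeros_in hi ones.
rewrite !zeros_in_ones => ? ? ? ?.
by case: (ord2_cases m) => ->; rewrite ?wdom1E ?wdom2E => /andP[];
  rewrite ?f11E ?f12E ?f21E ?f22E => ? ?; apply: eq_ones; lia.
Qed.

Lemma dom_ones m z : ~~ dom m z ones.
Proof.
apply/negP => /[dup] /andP[/wdom_ones -> _].
by rewrite /dom !ltnn andbF.
Qed.

Lemma flip_dom x j : x j = false ->
  dom (if lo j then ord0 else ord_max) (flip x j) x.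
Proof.
move=> xj; have hi_lo : hi j = ~~ lo j by rewrite /hi /lo leqNgt.
have := ones_in_flip lo xj; have := ones_in_flip hi xj.
have := zeros_in_flip lo xj; have := zeros_in_flip hi xj.
rewrite hi_lo; case: (lo j); rewrite /dom /wdom /= ?f11E ?f12E ?f21E ?f22E => ? ? ? ?; lia.
Qed.

Lemma commonPareto_sub1 : commonPareto n \subset [set ones].
Proof.
apply/fintype.subsetP => x /bigcapP x_opt; rewrite inE; apply/eqP/ffunP => j.
rewrite ffunE; apply/negPn/negP => /negbTE xj.
have := x_opt (if lo j then ord0 else ord_max) isT; rewrite inE.
by move/forallP/(_ (flip x j)); rewrite flip_dom.
Qed.

Lemma hit_ones (s : state n) : ones \in Phi s -> hit s.
Proof.
by move=> Phi_ones; apply: fintype.subset_trans commonPareto_sub1 _; rewrite finset.sub1set.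
Qed.

End Dominance.

Section Population.
Variable n : nat.
Implicit Types (s : state n) (x z : bs n) (m : 'I_2).
Local Notation ones := (ones n).

Definition accepts m s x' : bool :=
  ~~ [exists z in Pop m s, dom m z x' || (Fobj m z == Fobj m x')].

Lemma Pop_update m s x' : Pop m (update m s x') =
  if accepts m s x' then [set z in Pop m s | ~~ dom m x' z] :|: [set x'] else Pop m s.
Proof.
rewrite /update /accepts; case: ifP => //= _.
by case: (ord2_cases m) => ->; case: ifP.
Qed.

Lemma Pop1_update2 s x' : Pop ord0 (update ord_max s x') = Pop ord0 s.
Proof. by rewrite /update; case: ifP => //= _; case: ifP. Qed.

Lemma ones_in_Phi_update m s x' : ones \in Phi s -> ones \in Phi (update m s x').
Proof.
move=> Phi_ones; rewrite /update; case: ifP => //= _.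
case: ifP => _; first by case: (ord2_cases m) => ->.
rewrite /Phi /= !inE; apply/orP; left; apply/andP; split => //.
by apply/existsPn => m''; exact: dom_ones.
Qed.

Lemma accepted_ones_in_Phi m s : accepts m s ones -> ones \in Phi (update m s ones).
Proof.
rewrite /accepts /update => /negbTE ->.
case: ifP => [/existsP[z /andP[Phi_z /forallP /(_ ord0)]]|_].
  rewrite (negbTE (dom_ones _ _)) /= => /eqP Fz.
  have z_ones : z = ones by apply: (@wdom_ones n ord0); rewrite /wdom Fz !leqnn.
  by rewrite z_ones in Phi_z; case: (ord2_cases m) => ->.
by rewrite /Phi /= !inE eqxx orbT.
Qed.

Lemma accepts_not_wdom m s x' :
  (forall z, z \in Pop m s -> ~~ wdom m z x') -> accepts m s x'.
Proof.
move=> not_wdom; apply/existsPn => z.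
apply/negP => /andP[/not_wdom/negP nw /orP[/andP[]//|/eqP Fz]].
by apply: nw; rewrite /wdom Fz !leqnn.
Qed.

Lemma accepted_in_Pop m s x' : accepts m s x' -> x' \in Pop m (update m s x').
Proof. by rewrite Pop_update => ->; rewrite !inE eqxx orbT. Qed.

Lemma Pop_update_covers m s x' z : z \in Pop m s ->
  exists2 z', z' \in Pop m (update m s x') & wdom m z' z.
Proof.
rewrite Pop_update => Pz; case: ifP => _; last by exists z; rewrite /wdom ?leqnn.
case: (boolP (dom m x' z)) => [/andP[wd _]|nd].
  by exists x'; rewrite // !inE eqxx orbT.
by exists z; rewrite ?inE ?Pz ?nd /wdom ?leqnn.
Qed.

Definition wf_state s := [/\ Pop ord0 s != finset.set0,
  {in Pop ord0 s &, injective (@f11 n)} & (ones \in Pop ord0 s -> ones \in Phi s)].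

Lemma wf_state_init x : wf_state (init_state x).
Proof.
split; rewrite /Pop /= ?eqxx.
- by apply/set0Pn; exists x; rewrite inE.
- by move=> a b; rewrite !inE => /eqP -> /eqP ->.
- by [].
Qed.

Lemma accepts_f11_neq s x' z : accepts ord0 s x' -> z \in Pop ord0 s ->
  ~~ dom ord0 x' z -> f11 z != f11 x'.
Proof.
move=> /existsPn /(_ z) acc_x' Pz; apply: contraNneq => f11_eq.
move: acc_x'; rewrite Pz /dom /wdom /= f11_eq !leqnn ltnn /= negb_or.
by rewrite /Fobj /= xpair_eqE f11_eq eqxx /= => /andP[? ?]; lia.
Qed.

Lemma wf_state_update m s x' : wf_state s -> wf_state (update m s x').
Proof.
case=> Pop_ne f11_inj Pop_ones; case: (ord2_cases m) => ->; last first.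
  split; rewrite Pop1_update2 // => /Pop_ones; exact: ones_in_Phi_update.
rewrite /wf_state Pop_update; case: ifPn => [acc_x'|]; last first.
  by rewrite /update /accepts negbK => ->.
split.
- by apply/set0Pn; exists x'; rewrite !inE eqxx orbT.
- move=> a b; rewrite !inE => /orP[/andP[Pa a_ndom]|/eqP->] /orP[/andP[Pb b_ndom]|/eqP->] //.
  + exact: f11_inj.
  + by move/eqP; rewrite (negbTE (accepts_f11_neq acc_x' Pa a_ndom)).
  + by move/esym/eqP; rewrite (negbTE (accepts_f11_neq acc_x' Pb b_ndom)).
- rewrite !inE => /orP[/andP[/Pop_ones Phi_ones _]|/eqP ones_x'].
    exact: ones_in_Phi_update.
  by move: acc_x'; rewrite -ones_x'; exact: accepted_ones_in_Phi.
Qed.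

End Population.

Section Progress.
Variable n : nat.
Implicit Types (P : {set bs n}) (z : bs n).
Local Notation h2 := #|@hi n|.

Definition top1 P := \max_(z in P) f11 z.
Definition top2 P := \max_(z in P | f11 z == top1 P) f12 z.

Lemma f11_le z : f11 z <= h2.
Proof. by rewrite f11E -(ones_in_add_zeros_in (@hi n) z) leq_addr. Qed.

Lemma top1_le P : top1 P <= h2.
Proof. by apply/bigmax_leqP => z _; apply: f11_le. Qed.

Lemma le_top1 P z : z \in P -> f11 z <= top1 P.
Proof. by move=> Pz; apply: leq_bigmax_cond. Qed.

Lemma le_top2 P z : z \in P -> f11 z = top1 P -> f12 z <= top2 P.
Proof. by move=> Pz top_z; apply: leq_bigmax_cond; rewrite Pz top_z eqxx. Qed.

Lemma top_witness P : P != finset.set0 ->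
  exists2 z, z \in P & f11 z = top1 P /\ f12 z = top2 P.
Proof.
move=> /set0Pn[z0 Pz0].
have [y Py top1_y] : {y | y \in P & top1 P = f11 y}.
  by apply: eq_bigmax_cond; apply/card_gt0P; exists z0.
have [w /andP[Pw /eqP top1_w] top2_w] :
    {w | w \in [pred z | (z \in P) && (f11 z == top1 P)] & top2 P = f12 w}.
  by apply: eq_bigmax_cond; apply/card_gt0P; exists y; rewrite inE Py top1_y eqxx.
by exists w.
Qed.

Lemma top_lex_mono P P' : P != finset.set0 ->
  (forall z, z \in P -> exists2 z', z' \in P' & wdom ord0 z' z) ->
  top1 P <= top1 P' /\ (top1 P' = top1 P -> top2 P <= top2 P').
Proof.
move=> P_ne covered; have [y Py [top1_y top2_y]] := top_witness P_ne.
have [y' P'y'] := covered y Py; rewrite wdom1E => /andP[le1 le2].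
have := le_top1 P'y'; split; first lia.
move=> top1_eq; rewrite -top2_y (leq_trans le2) // le_top2 //; lia.
Qed.

End Progress.

Section Potential.
Variables (n : nat) (R : realType).
Local Open Scope ring_scope.
Implicit Types (s : state n) (x y : bs n) (m : 'I_2).
Local Notation h1 := #|@lo n|.
Local Notation h2 := #|@hi n|.
Local Notation H := (series (@harmonic R)).
Local Notation P1 s := (Pop ord0 s).

Definition pot_scale : R := (h2.+1 * n)%:R.

(* Bound on the expected number of party-1 mutations still needed from level
   (a, b) = (top1 P1, top2 P1): the h2 - a levels of f11, then the h1 - b
   levels of f12. *)
Definition pot (a b : nat) : R :=
  pot_scale * (if (a < h2)%N then H (h2 - a)%N + H h1 else H (h1 - b)%N).

Lemma pot_scale_ge0 : 0 <= pot_scale. Proof. exact: ler0n. Qed.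

Lemma pot_ge0 a b : 0 <= pot a b.
Proof.
by rewrite mulr_ge0 ?pot_scale_ge0 //; case: ifP => _; rewrite ?addr_ge0 ?harmonic_series_ge0.
Qed.

Lemma pot_ub a b : pot a b <= pot_scale * (H h2 + H h1).
Proof.
rewrite ler_wpM2l ?pot_scale_ge0 //; case: ifP => _.
  by rewrite lerD2r harmonic_series_le ?leq_subr.
by rewrite -[leLHS]add0r lerD ?harmonic_series_ge0 ?harmonic_series_le ?leq_subr.
Qed.

Lemma pot_le_lex a b a' b' : (a <= a')%N -> (a' <= h2)%N -> (a' = a -> b <= b')%N ->
  pot a' b' <= pot a b.
Proof.
move=> le_a a'_le le_b; rewrite ler_wpM2l ?pot_scale_ge0 //.
case: (ltnP a' h2) => a'_h2; case: (ltnP a h2) => a_h2.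
- by rewrite lerD2r harmonic_series_le //; lia.
- lia.
- by rewrite -[leLHS]add0r lerD ?harmonic_series_ge0 ?harmonic_series_le ?leq_subr.
- by rewrite harmonic_series_le //; have := le_b; lia.
Qed.

Lemma pot_lt_top1 a b a' b' : (a < a')%N -> (a' <= h2)%N ->
  pot a' b' <= pot a b - pot_scale / (h2 - a)%N%:R.
Proof.
move=> lt_a a'_le; have [k h2_a] : exists k, (h2 - a = k.+1)%N by exists (h2 - a).-1; lia.
have a_h2 : (a < h2)%N by lia.
rewrite /pot a_h2 h2_a seriesSr /= addrAC -mulrBr addrK ler_wpM2l ?pot_scale_ge0 //.
case: ifP => _; first by rewrite lerD2r harmonic_series_le //; lia.
by rewrite -[leLHS]add0r lerD ?harmonic_series_ge0 ?harmonic_series_le ?leq_subr.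
Qed.

Lemma pot_lt_top2 a b a' b' : (h2 <= a)%N -> (h2 <= a')%N -> (b < b')%N -> (b < h1)%N ->
  pot a' b' <= pot a b - pot_scale / (h1 - b)%N%:R.
Proof.
move=> h2_a h2_a' lt_b b_h1.
have [k h1_b] : exists k, (h1 - b = k.+1)%N by exists (h1 - b).-1; lia.
rewrite /pot !ltnNge h2_a h2_a' /= h1_b seriesSr /= -mulrBr addrK ler_wpM2l ?pot_scale_ge0 //.
by rewrite harmonic_series_le //; lia.
Qed.

Lemma pot_scale_le : (0 < n)%N -> pot_scale <= 2 * n%:R ^+ 2.
Proof.
move=> n_gt0; rewrite /pot_scale -natrX -[2]/(2%:R) -natrM ler_nat.
have := card_le_ord (@hi n); nia.
Qed.

Definition pot_state s : R := pot (top1 (P1 s)) (top2 (P1 s)).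

Lemma pot_state_ge0 s : 0 <= pot_state s. Proof. exact: pot_ge0. Qed.

Lemma step_mean m s (G : state n -> R) :
  \sum_s' step R m s s' * G s' =
  mean (Pop m s) (fun x (i : 'I_n) => G (update m s (flip x i))).
Proof.
rewrite /step /mean card_ord [RHS]mulr_suml; under eq_bigr do rewrite mulr_suml.
rewrite exchange_big /=; apply: eq_bigr => x _.
under eq_bigr do rewrite mulr_suml; rewrite [RHS]mulr_suml exchange_big /=.
apply: eq_bigr => i _.
rewrite (bigD1 (update m s (flip x i))) //= eqxx mul1r mulrC big1 ?addr0 // => s' /negbTE.
by rewrite eq_sym => ->; rewrite !mul0r.
Qed.

Lemma step_total_le1 m s : \sum_s' step R m s s' <= 1.
Proof.
have := step_mean m s (fun=> 1); under eq_bigr do rewrite mulr1.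
by move=> ->; apply: mean_le.
Qed.

Lemma pot_state_update2 s x' : pot_state (update ord_max s x') = pot_state s.
Proof. by rewrite /pot_state Pop1_update2. Qed.

Lemma pot_state_update1_le s x' : wf_state s -> pot_state (update ord0 s x') <= pot_state s.
Proof.
case=> P_ne _ _; have [le_top1 le_top2] := top_lex_mono P_ne (@Pop_update_covers n ord0 s x').
exact: pot_le_lex (top1_le _) le_top2.
Qed.

Lemma card_P1_le s : wf_state s -> (#|P1 s| <= h2.+1)%N.
Proof.
case=> _ f11_inj _; rewrite -(card_in_imset (f := fun z => inord (f11 z) : 'I_h2.+1)).
  by apply: leq_trans (max_card _) _; rewrite card_ord.
by move=> a b Pa Pb /(congr1 val) /=; rewrite !inordK ?ltnS ?f11_le //; exact: f11_inj.
Qed.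

Lemma flip_raises_top1 s y i : y \in P1 s -> f11 y = top1 (P1 s) -> hi i -> y i = false ->
  pot_state (update ord0 s (flip y i)) <= pot_state s - pot_scale / (h2 - top1 (P1 s))%N%:R.
Proof.
move=> Py top1_y hi_i yi.
have f11_flip : f11 (flip y i) = (top1 (P1 s)).+1.
  by rewrite f11E ones_in_flip // hi_i -f11E top1_y addn1.
have acc : accepts ord0 s (flip y i).
  apply: accepts_not_wdom => z Pz.
  by rewrite wdom1E negb_and -ltnNge f11_flip ltnS le_top1.
have := le_top1 (accepted_in_Pop acc); rewrite f11_flip => top1_lt.
exact: pot_lt_top1 top1_lt (top1_le _).
Qed.

Lemma flip_raises_top2 s y i : y \in P1 s -> f11 y = h2 -> f12 y = top2 (P1 s) ->
  lo i -> y i = false ->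
  pot_state (update ord0 s (flip y i)) <= pot_state s - pot_scale / (h1 - top2 (P1 s))%N%:R.
Proof.
move=> Py f11_y top2_y lo_i yi.
have hi_i : hi i = false by move: lo_i; rewrite /lo /hi ltnNge => /negbTE.
have top1_h2 : top1 (P1 s) = h2 by have := le_top1 Py; have := top1_le (P1 s); lia.
have := ones_in_add_zeros_in (@hi n) y; have := ones_in_add_zeros_in (@lo n) y.
have := ones_in_flip (@lo n) yi; have := ones_in_flip (@hi n) yi.
have := zeros_in_flip (@lo n) yi; have := zeros_in_flip (@hi n) yi.
rewrite lo_i hi_i !addn0 !addn1 => ? ? ? ? ? ?.
have f11_flip : f11 (flip y i) = h2 by move: f11_y; rewrite !f11E; lia.
have f12_flip : f12 (flip y i) = (top2 (P1 s)).+1 by rewrite -top2_y !f12E; lia.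
have acc : accepts ord0 s (flip y i).
  apply: accepts_not_wdom => z Pz; rewrite wdom1E negb_and -!ltnNge f11_flip f12_flip.
  have := f11_le z; rewrite leq_eqVlt => /orP[/eqP f11_z|->] //.
  by rewrite ltnS le_top2 ?orbT // f11_z top1_h2.
have := le_top1 (accepted_in_Pop acc); have := le_top2 (accepted_in_Pop acc).
have := top1_le (P1 (update ord0 s (flip y i))); rewrite f11_flip f12_flip => ? le_top2' ?.
have top2_lt : (top2 (P1 s) < top2 (P1 (update ord0 s (flip y i))))%N by apply: le_top2'; lia.
apply: pot_lt_top2 => //; move: f11_y top2_y; rewrite f11E f12E; lia.
Qed.

Lemma improving_flips s : wf_state s -> ~~ hit s ->
  exists2 y, y \in P1 s & exists2 G : pred 'I_n, (0 < #|G|)%N &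
    forall i, i \in G ->
      pot_state (update ord0 s (flip y i)) <= pot_state s - pot_scale / #|G|%:R.
Proof.
case=> P_ne _ ones_Phi not_hit; have [y Py [top1_y top2_y]] := top_witness P_ne.
exists y => //; have := ones_in_add_zeros_in (@hi n) y; have := ones_in_add_zeros_in (@lo n) y.
rewrite -f11E => ? ?.
case: (ltnP (top1 (P1 s)) h2) => [top1_lt|top1_ge].
  exists [pred i | hi i && ~~ y i]; rewrite -zeros_in_card; first lia.
  move=> i /andP[hi_i /negbTE yi]; have -> : zeros_in (@hi n) y = (h2 - top1 (P1 s))%N by lia.
  exact: flip_raises_top1.
have f11_y : f11 y = h2 by have := top1_le (P1 s); lia.
have zeros_hi : zeros_in (@hi n) y = 0%N by lia.
have zeros_lo : (0 < zeros_in (@lo n) y)%N.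
  rewrite lt0n; apply: contraNN not_hit => /eqP zeros_lo.
  by apply: hit_ones; apply: ones_Phi; rewrite -(eq_ones zeros_lo zeros_hi).
exists [pred i | lo i && ~~ y i]; rewrite -zeros_in_card //.
move=> i /andP[lo_i /negbTE yi].
have -> : zeros_in (@lo n) y = (h1 - top2 (P1 s))%N by rewrite -top2_y f12E; lia.
exact: flip_raises_top2.
Qed.

Lemma drift_party1 s : wf_state s -> ~~ hit s ->
  \sum_s' step R ord0 s s' * pot_state s' <= pot_state s - 1.
Proof.
move=> wf not_hit; rewrite step_mean.
have [y Py [G G_gt0 G_improves]] := improving_flips wf not_hit.
apply: (mean_le_sub1 Py G_gt0 _ _ G_improves).
- by rewrite card_ord ler_nat leq_mul2r card_P1_le ?orbT.
- by move=> x i _; apply: pot_state_update1_le.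
Qed.

Lemma drift_party2 s : \sum_s' step R ord_max s s' * pot_state s' <= pot_state s.
Proof.
by rewrite step_mean; apply: mean_le => [|x i _]; rewrite ?pot_state_update2 ?pot_state_ge0.
Qed.

End Potential.

Section Runtime.
Variables (n : nat) (R : realType).
Local Open Scope ring_scope.
Implicit Types (s : state n) (m : 'I_2).
Local Notation h1 := #|@lo n|.
Local Notation h2 := #|@hi n|.
Local Notation H := (series (@harmonic R)).
Local Notation pot_scale := (pot_scale n R).
Local Notation pot_state := (@pot_state n R).

Lemma step_ge0 m s s' : 0 <= step R m s s'.
Proof. by apply: sumr_ge0 => x _; apply: sumr_ge0 => i _; rewrite divr_ge0 ?ler0n. Qed.

Lemma step_gt0 m s s' : 0 < step R m s s' -> exists x i, s' = update m s (flip x i).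
Proof.
case: (boolP [exists x, [exists i, update m s (flip x i) == s']]).
  by move=> /existsP[x /existsP[i /eqP <-]]; exists x, i.
move=> /existsPn none; rewrite /step big1 ?ltxx // => x _; rewrite big1 // => i _.
by move/existsPn/(_ i)/negbTE: (none x) => ->; rewrite mul0r.
Qed.

Lemma q_ge0 t s : 0 <= q R t s.
Proof.
elim: t s => [|t IH] s /=; case: ifP => // _.
  by apply: sumr_ge0 => x _; rewrite divr_ge0 ?ler0n.
by apply: sumr_ge0 => s0 _; rewrite mulr_ge0 ?step_ge0.
Qed.

Lemma q_succ_le t s' : q R t.+1 s' <= \sum_s q R t s * step R (party t) s s'.
Proof.
by rewrite /=; case: ifP => // _; apply: sumr_ge0 => s _; rewrite mulr_ge0 ?q_ge0 ?step_ge0.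
Qed.

Lemma q_gt0_not_hit t s : 0 < q R t s -> ~~ hit s.
Proof. by case: t => [|t] /=; case: hit; rewrite ?ltxx. Qed.

Lemma q_gt0_wf t s : 0 < q R t s -> wf_state s.
Proof.
elim: t s => [|t IH] s /=; case: ifP => _; rewrite ?ltxx //.
  move=> /lt0r_neq0/eqP/psumr_neq0P[x _|x /andP[_]]; first by rewrite divr_ge0 ?ler0n.
  by case: eqP => [->|]; [move=> _; exact: wf_state_init | rewrite mul0r ltxx].
move=> /lt0r_neq0/eqP/psumr_neq0P[s0 _|s0 /andP[_]].
  by rewrite mulr_ge0 ?q_ge0 ?step_ge0.
have := q_ge0 t s0; rewrite le0r => /orP[/eqP->|q_gt0]; first by rewrite mul0r ltxx.
by rewrite pmulr_rgt0 // => /step_gt0[x [i ->]]; apply/wf_state_update/IH.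
Qed.

(* Party 1 mutates at even times only; the parity term pays for the party-2
   mutation in between. *)
Definition runtime_pot (t : nat) s : R := 2 * pot_state s + (odd t)%:R.

Lemma runtime_pot_drift t s : 0 < q R t s ->
  1 + \sum_s' step R (party t) s s' * runtime_pot t.+1 s' <= runtime_pot t s.
Proof.
move=> q_gt0; have wf := q_gt0_wf q_gt0; have not_hit := q_gt0_not_hit q_gt0.
have split_pot m : \sum_s' step R m s s' * runtime_pot t.+1 s' =
    2 * (\sum_s' step R m s s' * pot_state s') + (~~ odd t)%:R * \sum_s' step R m s s'.
  rewrite !mulr_sumr -big_split; apply: eq_bigr => s' _.
  by rewrite /runtime_pot /= mulrDr mulrCA [_ * (~~ odd t)%:R]mulrC.
rewrite split_pot /runtime_pot /party; case: (odd t) => /=.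
  by rewrite mul0r addr0 addrC lerD2r ler_wpM2l // drift_party2.
have := drift_party1 R wf not_hit; have := step_total_le1 R ord0 s; lra.
Qed.

Lemma q0_total_le1 : \sum_(s : state n) q R 0 s <= 1.
Proof.
have q0_le s : q R 0 s <= \sum_(x : bs n) (s == init_state x)%:R / (2 ^ n)%:R.
  by rewrite /=; case: ifP => // _; apply: sumr_ge0 => x _; rewrite divr_ge0 ?ler0n.
apply: le_trans (ler_sum _ (fun s _ => q0_le s)) _; rewrite exchange_big /=.
have init_once x : \sum_(s : state n) (s == init_state x)%:R / (2 ^ n)%:R = (2 ^ n)%:R^-1 :> R.
  rewrite (bigD1 (init_state x)) //= eqxx mul1r big1 ?addr0 // => s /negbTE ->.
  by rewrite mul0r.
rewrite (eq_bigr _ (fun x _ => init_once x)) sumr_const card_ffun card_bool card_ord.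
by rewrite -(mulr_natr ((2 ^ n)%:R^-1)) mulVf // pnatr_eq0 expn_eq0.
Qed.

Lemma runtime_pot0_le s : runtime_pot 0 s <= 2 * (pot_scale * (H h2 + H h1)).
Proof. by rewrite /runtime_pot addr0 ler_wpM2l // pot_ub. Qed.

Lemma expected_runtime_le :
  (expected_runtime n R <= (2 * (pot_scale * (H h2 + H h1)))%:E)%E.
Proof.
apply: nneseries_le => [t|N]; first by apply: sumr_ge0 => s _; apply: q_ge0.
have V_ge0 t s : 0 <= runtime_pot t s.
  by apply: addr_ge0; rewrite // mulr_ge0 ?pot_state_ge0.
apply: le_trans (@additive_drift R _ (fun t => step R (party t)) _ _
  q_ge0 V_ge0 q_succ_le runtime_pot_drift N) _.
apply: le_trans (_ : \sum_s q R 0 s * (2 * (pot_scale * (H h2 + H h1))) <= _).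
  by apply: ler_sum => s _; rewrite ler_wpM2l ?q_ge0 ?runtime_pot0_le.
rewrite -mulr_suml ler_piMl ?q0_total_le1 //.
by rewrite mulr_ge0 // mulr_ge0 ?pot_scale_ge0 // addr_ge0 ?harmonic_series_ge0.
Qed.

End Runtime.

Local Open Scope ring_scope.

Theorem theorem1 (R : realType) :
  exists (c : R) (N0 : nat), 0 < c /\
    forall n : nat, ~~ odd n -> (N0 <= n)%N ->
      (expected_runtime n R <= (c * (3 * (n%:R ^+ 2) * ln (n%:R : R)))%:E)%E.
Proof.
exists 6, 4%N; split => // n _ n_ge4.
apply: le_trans (expected_runtime_le n R) _; rewrite lee_fin.
have ln_ge1 := ln_nat_ge1 R n_ge4.
have H_le (P : pred 'I_n) : series (@harmonic R) #|P| <= 2 * ln n%:R.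
  apply: le_trans (harmonic_series_le _ (card_le_ord P)) _.
  by apply: le_trans (harmonic_series_le_ln _ _) _; [lia | lra].
have sum_H_le := lerD (H_le (@hi n)) (H_le (@lo n)).
have scale_le : pot_scale n R <= 2 * n%:R ^+ 2 by apply: pot_scale_le; lia.
have sum_H_ge0 := addr_ge0 (harmonic_series_ge0 R #|@hi n|) (harmonic_series_ge0 R #|@lo n|).
have := ler_pM (pot_scale_ge0 n R) sum_H_ge0 scale_le sum_H_le.
have : 0 <= n%:R ^+ 2 * ln n%:R :> R by rewrite mulr_ge0 ?sqr_ge0 //; lra.
lra.
Qed.
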